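(* Let $n,m,\ell,N,K\in\mathbb{N}$, let $(\Delta,\mathcal{D},\mathbb{P})$ be a probability space with $\Delta\subseteq\mathbb{R}^\ell$, and let $A:\mathbb{R}^\ell\to\mathbb{R}^{n\times n}$, $B:\mathbb{R}^\ell\to\mathbb{R}^{n\times m}$. Let $\mathscr{X}\subseteq\mathbb{R}^n$ be a C-set, $\mathscr{U}\subseteq\mathbb{R}^m$ a C-polytope, and $\mathcal{S}\subseteq\mathscr{X}$ a C-polytope with vertices $x_1,\dots,x_N$. Fix $\beta\in(0,1)$ and $\varepsilon:\{0,\dots,K\}\to[0,1]$ with $\varepsilon(K)=1$ and $\sum_{h=0}^{K-1}\binom{K}{h}(1-\varepsilon(h))^{K-h}=\beta$. Assume $\mathcal{L}_{\delta_K}\neq\emptyset$ for every $\delta_K\in\Delta^K$, and let $(\boldsymbol{C}^\star_K,\boldsymbol{d}^\star_K)=\Theta_K(\delta_K)$, $s_K=|\Upsilon_K(\delta_K)|$. Then, with $\mathbb{P}^K$-probability at least $1-\beta$ over $\delta_K$, the following holds: the $\mathbb{P}$-probability of the set of $\delta\in\Delta$ for which the vertex control law with vertex inputs $u_i=C^\star_{i,K}\delta+d^\star_{i,K}$, $i=1,\dots,N$, makes $\mathcal{S}$ controlled invariant for the system $x(t+1)=A(\delta)x(t)+B(\delta)u(t)$ (i.e. every closed-loop trajectory with $x(0)\in\mathcal{S}$ satisfies $u(t)\in\mathscr{U}$ and $x(t)\in\mathcal{S}$ for all $t\in\mathbb{N}$) is at least $1-\varepsilon(s_K)$.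
   Context: A C-set is a convex bounded set with the origin in its interior; a C-polytope is a polyhedral C-set. $\mathbb{P}^K$ is the product measure; $\delta_K=(\delta^{(1)},\dots,\delta^{(K)})$ are i.i.d. draws from $\mathbb{P}$. $\mathcal{M}$ is the set of pairs $(\boldsymbol{C},\boldsymbol{d})$, $\boldsymbol{C}=\mathrm{col}(C_1,\dots,C_N)$, $C_i\in\mathbb{R}^{m\times\ell}$, $\boldsymbol{d}=\mathrm{col}(d_1,\dots,d_N)$, $d_i\in\mathbb{R}^m$. For $\delta\in\Delta$, $\mathcal{L}_\delta=\{(\boldsymbol{C},\boldsymbol{d})\in\mathcal{M}: C_i\delta+d_i\in\mathscr{U},\ A(\delta)x_i+B(\delta)(C_i\delta+d_i)\in\mathcal{S}\ \forall i\}$ and $\mathcal{L}_{\delta_K}=\bigcap_{j}\mathcal{L}_{\delta^{(j)}}$. For each $p$, $\Theta_p:\Delta^p\to\mathcal{M}$ is a single-valued tie-break map selecting an element of the (nonempty) set $\mathcal{L}$ of its argument. A support subsample of $\delta_K$ is $(\delta^{(i_1)},\dots,\delta^{(i_p)})$, $i_1<\dots<i_p$, with $\Theta_p(\delta^{(i_1)},\dots,\delta^{(i_p)})=\Theta_K(\delta_K)$; $\Upsilon_K$ is any map returning the index set of a support subsample. Vertex control law with vertex inputs $u_1,\dots,u_N\in\mathbb{R}^m$: $u(t)=\sum_{i=1}^N\gamma^\star_i(t)u_i$, where $\gamma^\star(t)\in\operatorname{argmin}_{\gamma\in[0,1]^N}\{\mathbf{1}_N^\top\gamma : \sum_{i=1}^N\gamma_ix_i=x(t)\}$.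 *)

From HB Require Import structures.
From mathcomp Require Import all_boot all_order all_algebra.
From mathcomp Require Import all_classical all_reals all_analysis.
From Stdlib Require List.
Set Implicit Arguments. Unset Strict Implicit. Unset Printing Implicit Defensive.
Import Order.TTheory GRing.Theory Num.Theory.
Import numFieldNormedType.Exports.
Local Open Scope classical_set_scope.
Local Open Scope ring_scope.

Section Defs.
Variable R : realType.

Definition Cset (n : nat) (X : set 'cV[R]_n) : Prop :=
  convex_set (X : set (convex_lmodType 'cV[R]_n)) /\ bounded_set X /\ interior X 0.

Definition polyhedral (n : nat) (X : set 'cV[R]_n) : Prop :=
  exists (k : nat) (F : 'M[R]_(k, n)) (g : 'cV[R]_k),
    X = [set x | forall i : 'I_k, (F *m x) i 0 <= g i 0].

Definition Cpolytope (n : nat) (X : set 'cV[R]_n) : Prop :=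
  Cset X /\ polyhedral X.

Definition is_vertex (n : nat) (X : set 'cV[R]_n) (v : 'cV[R]_n) : Prop :=
  X v /\ forall (y z : 'cV[R]_n) (lam : R), X y -> X z -> 0 < lam -> lam < 1 ->
    v = lam *: y + (1 - lam) *: z -> y = z.

Definition vertices_of (n N : nat) (X : set 'cV[R]_n) (xs : 'I_N -> 'cV[R]_n) :=
  injective xs /\ forall v, is_vertex X v <-> exists i, v = xs i.

(** The pairs (C, d): C = col(C_1,..,C_N), d = col(d_1,..,d_N). *)
Definition Mset (m l N : nat) : Type := ('I_N -> 'M[R]_(m, l)) * ('I_N -> 'cV[R]_m).

Definition Lset (n m l N : nat) (A : 'cV[R]_l -> 'M[R]_n) (B : 'cV[R]_l -> 'M[R]_(n, m))
  (U : set 'cV[R]_m) (S : set 'cV[R]_n) (xs : 'I_N -> 'cV[R]_n)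
  (delta : 'cV[R]_l) : set (Mset m l N) :=
  [set c | forall i : 'I_N, U (c.1 i *m delta + c.2 i) /\
           S (A delta *m xs i + B delta *m (c.1 i *m delta + c.2 i))].

Definition Lseq (T : Type) (n m l N : nat) (iota : T -> 'cV[R]_l)
  (A : 'cV[R]_l -> 'M[R]_n) (B : 'cV[R]_l -> 'M[R]_(n, m))
  (U : set 'cV[R]_m) (S : set 'cV[R]_n) (xs : 'I_N -> 'cV[R]_n)
  (s : seq T) : set (Mset m l N) :=
  [set c | forall d, List.In d s -> Lset A B U S xs (iota d) c].

Definition vfeasible (n N : nat) (xs : 'I_N -> 'cV[R]_n) (x : 'cV[R]_n) (g : 'I_N -> R) :=
  (forall i, 0 <= g i <= 1) /\ \sum_(i < N) g i *: xs i = x.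
Definition vargmin (n N : nat) (xs : 'I_N -> 'cV[R]_n) (x : 'cV[R]_n) (g : 'I_N -> R) :=
  vfeasible xs x g /\
  forall g', vfeasible xs x g' -> \sum_(i < N) g i <= \sum_(i < N) g' i.

(** Stated on all finite trajectory prefixes so that no
    trajectory is excluded for lack of a continuation. *)
Definition vertex_law_invariant (n m N : nat) (Ad : 'M[R]_n) (Bd : 'M[R]_(n, m))
  (U : set 'cV[R]_m) (S : set 'cV[R]_n) (xs : 'I_N -> 'cV[R]_n)
  (us : 'I_N -> 'cV[R]_m) : Prop :=
  forall (Tf : nat) (x : nat -> 'cV[R]_n) (g : nat -> 'I_N -> R),
    S (x 0%N) ->
    (forall t, (t < Tf)%N ->
       vargmin xs (x t) (g t) /\
       x t.+1 = Ad *m x t + Bd *m (\sum_(i < N) g t i *: us i)) ->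
    S (x Tf) /\
    forall t, (t < Tf)%N -> U (\sum_(i < N) g t i *: us i).

(** Q is the K-fold product P^K on K-tuples (determined by its values on
    measurable rectangles, which generate the product sigma-algebra). *)
Definition is_product_prob (d : measure_display) (T : measurableType d) (K : nat)
  (P : probability T R) (Q : probability (K.-tuple T) R) : Prop :=
  forall Af : 'I_K -> set T, (forall i, measurable (Af i)) ->
    Q [set t | forall i, Af i (tnth t i)] = (\prod_(i < K) P (Af i))%E.

End Defs.

(* Control: a point of the bounded polyhedron S is a convex combination of its
   vertices, so the minimal vertex weights gamma(t) have total mass at most 1.
   Since U and S are convex and contain 0, feasibility of the vertex inputs and
   of the vertex successors, i.e. Theta(delta_K) in L_delta, carries over to u(t)
   and x(t+1), and S is invariant by induction on t.
   Probability (compression): for I with |I| < K, consider the event that Theta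
   of the subsample indexed by I is satisfied with probability below
   1 - eps(|I|) while all K - |I| other samples satisfy it.  Exchanging the
   I-coordinates with those of an independent copy preserves P^K, so given the
   I-coordinates the other samples are still i.i.d. and the event has
   probability at most (1 - eps(|I|))^(K - |I|).  By the union bound and
   counting the sets I by size, all these events together have probability at
   most beta; off them, the support subsample I = Ups(delta_K) reproduces
   Theta(delta_K), which is therefore satisfied with probability at least
   1 - eps(|I|) (trivially so when |I| = K, as eps(K) = 1). *)

From mathcomp Require Import all_boot all_order all_algebra.
From mathcomp Require Import all_classical all_reals all_analysis.
From mathcomp Require Import ring lra.
Import Order.TTheory GRing.Theory Num.Theory.
Import numFieldNormedType.Exports.
Set Implicit Arguments. Unset Strict Implicit. Unset Printing Implicit Defensive.
Local Open Scope classical_set_scope.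
Local Open Scope ring_scope.

Section Polyhedron.
Variables (R : realType) (k n : nat) (F : 'M[R]_(k, n)) (g : 'cV[R]_k).

Definition polyhedron : set 'cV[R]_n := [set x | forall i, (F *m x) i 0 <= g i 0].

Lemma polyhedron_subconvex N (ys : 'I_N -> 'cV[R]_n) (w : 'I_N -> R) :
  polyhedron 0 -> (forall i, 0 <= w i) -> \sum_i w i <= 1 ->
  (forall i, polyhedron (ys i)) -> polyhedron (\sum_i w i *: ys i).
Proof.
move=> P0 w_ge0 w_le1 Pys j.
have g_ge0 : 0 <= g j 0 by move: (P0 j); rewrite mulmx0 mxE.
rewrite mulmx_sumr summxE (le_trans (y := \sum_i w i * g j 0)) //.
  apply: ler_sum => i _; rewrite -scalemxAr mxE.
  by apply: ler_wpM2l => //; apply: Pys.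
by rewrite -mulr_suml -[leRHS]mul1r ler_wpM2r.
Qed.

Definition inactive_constraints (x : 'cV[R]_n) := #|[pred i | (F *m x) i 0 < g i 0]|.

Lemma polyhedron_move_to_face (x v : 'cV[R]_n) : polyhedron x ->
  (forall i, (F *m x) i 0 = g i 0 -> (F *m v) i 0 = 0) ->
  (exists i, 0 < (F *m v) i 0) ->
  exists2 t, 0 < t & polyhedron (x + t *: v) /\
    (inactive_constraints (x + t *: v) < inactive_constraints x)%N.
Proof.
move=> Px active_v [i0 Fv_i0].
(* r i is the step along v at which constraint i becomes active *)
pose r i := (g i 0 - (F *m x) i 0) / (F *m v) i 0.
have [i Fv_i r_min] := arg_minP r (P := fun i => 0 < (F *m v) i 0) Fv_i0.
have Fx_i : (F *m x) i 0 < g i 0.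
  rewrite lt_neqAle Px andbT; apply/eqP => /active_v Fv_i0'.
  by move: Fv_i; rewrite Fv_i0' ltxx.
have r_gt0 : 0 < r i by rewrite divr_gt0 // subr_gt0.
have r_hit : r i * (F *m v) i 0 = g i 0 - (F *m x) i 0 by rewrite divfK ?gt_eqF.
have Fxv j : (F *m (x + r i *: v)) j 0 = (F *m x) j 0 + r i * (F *m v) j 0.
  by rewrite mulmxDr -scalemxAr !mxE.
exists (r i) => //; split.
  move=> j; rewrite Fxv.
  have [Fv_j|Fv_j] := ltP 0 ((F *m v) j 0).
    have := r_min j Fv_j; rewrite -(ler_pM2r Fv_j) /r divfK ?gt_eqF //; lra.
  have := Px j; have : r i * (F *m v) j 0 <= 0 by rewrite mulr_ge0_le0 // ltW.
  lra.
apply/proper_card/properP; split.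
  apply/fintype.subsetP => j; rewrite !inE Fxv => Fxv_j.
  rewrite lt_neqAle Px andbT; apply/eqP => /[dup] Fx_j /active_v Fv_j.
  by move: Fxv_j; rewrite Fv_j mulr0 addr0 Fx_j ltxx.
by exists i; rewrite !inE // Fxv r_hit addrC subrK ltxx.
Qed.

Hypothesis bounded : exists M : R, forall x, polyhedron x -> `|x| <= M.

Lemma bounded_polyhedron_no_ray (x v : 'cV[R]_n) : polyhedron x -> v != 0 ->
  exists i, 0 < (F *m v) i 0.
Proof.
move=> Px v_neq0; apply/not_existsP => no_pos.
have Fv_le0 i : (F *m v) i 0 <= 0 by rewrite leNgt; apply/negP => /no_pos.
have [M HM] := bounded.
have v_gt0 : 0 < `|v| by rewrite normr_gt0.
pose t := (`|M| + `|x| + 1) / `|v|.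
have t_ge0 : 0 <= t by rewrite divr_ge0.
have Pxtv : polyhedron (x + t *: v).
  move=> i; rewrite mulmxDr -scalemxAr mxE [X in _ + X]mxE.
  have := Px i; have : t * (F *m v) i 0 <= 0 by rewrite mulr_ge0_le0.
  lra.
have := HM _ Pxtv; have := lerB_normD (t *: v) x.
rewrite normrZ ger0_norm // /t divfK ?gt_eqF // [x + _]addrC.
have := ler_norm M; lra.
Qed.

Lemma nonvertex_split x : polyhedron x -> ~ is_vertex polyhedron x ->
  exists x1 x2 (a b : R),
    [/\ polyhedron x1, polyhedron x2,
        (inactive_constraints x1 < inactive_constraints x)%N
      & (inactive_constraints x2 < inactive_constraints x)%N] /\
    [/\ 0 <= a, 0 <= b, a + b = 1 & x = a *: x1 + b *: x2].
Proof.
move=> Px not_vertex.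
have [y [z [lam [Py [Pz [lam_gt0 [lam_lt1 [xE y_neq_z]]]]]]]] :
    exists y z lam, polyhedron y /\ polyhedron z /\ 0 < lam /\ lam < 1 /\
      x = lam *: y + (1 - lam) *: z /\ y != z.
  apply: contrapT => H; apply: not_vertex; split => // y z lam Py Pz ? ? ?.
  by apply/eqP/negPn/negP => ?; apply: H; exists y, z, lam.
pose v := y - z.
have v_neq0 : v != 0 by rewrite subr_eq0.
(* a constraint active at x is active at both y and z *)
have active_v i : (F *m x) i 0 = g i 0 -> (F *m v) i 0 = 0.
  have -> : (F *m x) i 0 = lam * (F *m y) i 0 + (1 - lam) * (F *m z) i 0.
    by rewrite xE mulmxDr -!scalemxAr !mxE.
  have -> : (F *m v) i 0 = (F *m y) i 0 - (F *m z) i 0 by rewrite mulmxBr !mxE.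
  have := Py i; have := Pz i; nra.
have active_Nv i : (F *m x) i 0 = g i 0 -> (F *m (- v)) i 0 = 0.
  by move=> /active_v Fv_i; rewrite mulmxN mxE Fv_i oppr0.
(* moving from x along v and along -v until a new constraint becomes active
   exhibits x as a convex combination of points on smaller faces *)
have [t1 t1_gt0 [P1 lt1]] :=
  polyhedron_move_to_face Px active_v (bounded_polyhedron_no_ray Px v_neq0).
have Nv_neq0 : - v != 0 by rewrite oppr_eq0.
have [t2 t2_gt0 [P2 lt2]] :=
  polyhedron_move_to_face Px active_Nv (bounded_polyhedron_no_ray Px Nv_neq0).
exists (x + t1 *: v), (x + t2 *: - v), (t2 / (t1 + t2)), (t1 / (t1 + t2)).
have t12_gt0 : 0 < t1 + t2 by rewrite addr_gt0.
split=> //; split; rewrite ?divr_ge0 ?ltW //; first by field; rewrite gt_eqF.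
by apply/matrixP => i j; rewrite !mxE; field; rewrite gt_eqF.
Qed.

Variables (N : nat) (xs : 'I_N -> 'cV[R]_n).
Hypothesis vertices : vertices_of polyhedron xs.

Lemma polyhedron_vertex_hull x : polyhedron x -> exists w : 'I_N -> R,
  [/\ forall i, 0 <= w i, \sum_i w i = 1 & \sum_i w i *: xs i = x].
Proof.
have [p] := ubnP (inactive_constraints x); elim: p x => // p IH x.
rewrite ltnS => x_p Px; have [x_vertex|not_vertex] := pselect (is_vertex polyhedron x).
  have [j ->] := (proj2 vertices x).1 x_vertex.
  exists (fun i => (i == j)%:R); split; first by move=> i; rewrite ler0n.
    by rewrite (bigD1 j) //= eqxx big1 ?addr0 // => i /negbTE ->.
  by rewrite (bigD1 j) //= eqxx scale1r big1 ?addr0 // => i /negbTE ->; rewrite scale0r.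
have [x1 [x2 [a [b [[P1 P2 lt1 lt2] [a_ge0 b_ge0 ab1 ->]]]]]] := nonvertex_split Px not_vertex.
have [w1 [w1_ge0 w1_sum w1E]] := IH x1 (leq_trans lt1 x_p) P1.
have [w2 [w2_ge0 w2_sum w2E]] := IH x2 (leq_trans lt2 x_p) P2.
exists (fun i => a * w1 i + b * w2 i); split.
- by move=> i; rewrite addr_ge0 // mulr_ge0.
- by rewrite big_split /= -!mulr_sumr w1_sum w2_sum !mulr1.
- under eq_bigr do rewrite scalerDl -!scalerA.
  by rewrite big_split /= -!scaler_sumr w1E w2E.
Qed.

End Polyhedron.

Section Cpolytope.
Variable R : realType.

Lemma Cpolytope_polyhedron n (X : set 'cV[R]_n) : Cpolytope X ->
  exists k (F : 'M[R]_(k, n)) (g : 'cV[R]_k),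
    [/\ X = polyhedron F g, X 0 & exists M : R, forall x, X x -> `|x| <= M].
Proof.
move=> [[_ [[M [_ XM]] X0]] [k [F [g XE]]]].
exists k, F, g; split=> //; first exact: nbhs_singleton.
by exists (M + 1) => x Xx; apply: XM => //; lra.
Qed.

Lemma Cpolytope_subconvex n N (X : set 'cV[R]_n) (ys : 'I_N -> 'cV[R]_n)
    (w : 'I_N -> R) :
  Cpolytope X -> (forall i, 0 <= w i) -> \sum_i w i <= 1 ->
  (forall i, X (ys i)) -> X (\sum_i w i *: ys i).
Proof. by move=> /Cpolytope_polyhedron [k [F [g [-> X0 _]]]]; exact: polyhedron_subconvex. Qed.

Lemma vargmin_sum_le1 n N (X : set 'cV[R]_n) (xs : 'I_N -> 'cV[R]_n) x gam :
  Cpolytope X -> vertices_of X xs -> X x -> vargmin xs x gam -> \sum_i gam i <= 1.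
Proof.
move=> /Cpolytope_polyhedron [k [F [g [-> _ bounded]]]] vertices Xx [_ gam_min].
have [w [w_ge0 w_sum wE]] := polyhedron_vertex_hull bounded vertices Xx.
rewrite -w_sum; apply: gam_min; split=> // i.
by rewrite w_ge0 -w_sum (bigD1 i) //= lerDl sumr_ge0.
Qed.

End Cpolytope.

Section VertexControl.
Variables (R : realType) (n m N : nat) (Ad : 'M[R]_n) (Bd : 'M[R]_(n, m)).
Variables (U : set 'cV[R]_m) (S : set 'cV[R]_n).
Variables (xs : 'I_N -> 'cV[R]_n) (us : 'I_N -> 'cV[R]_m).
Hypotheses (CU : Cpolytope U) (CS : Cpolytope S) (vertices : vertices_of S xs).
Hypothesis us_feasible : forall i, U (us i) /\ S (Ad *m xs i + Bd *m us i).

Lemma vertex_law_step x gam : S x -> vargmin xs x gam ->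
  U (\sum_i gam i *: us i) /\ S (Ad *m x + Bd *m (\sum_i gam i *: us i)).
Proof.
move=> Sx gam_min; have gam_le1 := vargmin_sum_le1 CS vertices Sx gam_min.
have [[gam01 gamE] _] := gam_min.
have gam_ge0 i : 0 <= gam i by case/andP: (gam01 i).
split; first by apply: Cpolytope_subconvex => // i; case: (us_feasible i).
have -> : Ad *m x + Bd *m (\sum_i gam i *: us i) =
    \sum_i gam i *: (Ad *m xs i + Bd *m us i).
  rewrite -gamE !mulmx_sumr -big_split /=; apply: eq_bigr => i _.
  by rewrite scalerDr !scalemxAr.
by apply: Cpolytope_subconvex => // i; case: (us_feasible i).
Qed.

Lemma vertex_law_invariant_of_feasible : vertex_law_invariant Ad Bd U S xs us.
Proof.
move=> Tf x gam Sx0 closed_loop.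
have Sx t : (t <= Tf)%N -> S (x t).
  elim: t => [//|t IH] t_lt; have [gam_min ->] := closed_loop t t_lt.
  exact: (vertex_law_step (IH (ltnW t_lt)) gam_min).2.
split=> [|t t_lt]; first exact: Sx.
have [gam_min _] := closed_loop t t_lt.
exact: (vertex_law_step (Sx t (ltnW t_lt)) gam_min).1.
Qed.

End VertexControl.

Section TupleRectangles.
Context d (T : measurableType d) (k : nat).

Definition rect (Af : 'I_k -> set T) : set (k.-tuple T) :=
  [set t | forall i, Af i (tnth t i)].

Lemma rect_measurable Af : (forall i, measurable (Af i)) -> measurable (rect Af).
Proof.
move=> mAf; have -> : rect Af = \bigcap_i (@tnth k T ^~ i @^-1` Af i).
  by apply/seteqP; split=> [t tA i _|t tA i]; exact: tA.
apply: fin_bigcap_measurable => [|i _]; first exact: finite_finset.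
by rewrite -[X in measurable X]setTI; exact: measurable_tnth.
Qed.

Definition measurable_rects : set (set (k.-tuple T)) :=
  [set X | exists2 Af, (forall i, measurable (Af i)) & X = rect Af].

Lemma measurable_tuple_rects : measurable = <<s measurable_rects >>.
Proof.
apply/seteqP; split; last first.
  apply: smallest_sub; first exact: sigma_algebra_measurable.
  by move=> _ [Af mAf ->]; exact: rect_measurable.
apply: smallest_sub; first exact: smallest_sigma_algebra.
elim/big_ind: _ => [//|X Y sX sY Z [/sX|/sY] //|i _ X [A mA <-]].
apply: sub_sigma_algebra; exists (fun j => if j == i then A else setT).
  by move=> j; case: (j == i).
apply/seteqP; split=> t /=; first by move=> [_ tA] j; case: eqP => [->|].
by move=> /(_ i); rewrite eqxx.
Qed.

Lemma setI_closed_rects : setI_closed measurable_rects.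
Proof.
move=> _ _ [Af mAf ->] [Bf mBf ->]; exists (fun i => Af i `&` Bf i).
  by move=> i; exact: measurableI.
by apply/seteqP; split=> t; [move=> [tA tB] i | move=> tAB; split=> i; case: (tAB i)].
Qed.

End TupleRectangles.

Section Splice.
Local Open Scope ereal_scope.
Context d (T : measurableType d) (R : realType) (P : probability T R) (K : nat).
Variables (Q : probability (K.-tuple T) R) (I : {set 'I_K}).
Hypothesis QP : is_product_prob P Q.

Definition splice (p : K.-tuple T * K.-tuple T) : K.-tuple T :=
  [tuple if i \in I then tnth p.1 i else tnth p.2 i | i < K].

Lemma measurable_splice : measurable_fun setT splice.
Proof.
apply/measurable_fun_tnthP => i.
have -> : @tnth K T ^~ i \o splice =
    if i \in I then @tnth K T ^~ i \o fst else @tnth K T ^~ i \o snd.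
  by apply/funext => p; rewrite /= tnth_mktuple; case: (i \in I).
by case: (i \in I); apply: measurableT_comp => //; exact: measurable_tnth.
Qed.

Lemma splice_rect (Af : 'I_K -> set T) : splice @^-1` rect Af =
  rect (fun i => if i \in I then Af i else setT) `*`
  rect (fun i => if i \in I then setT else Af i).
Proof.
apply/seteqP; split=> -[x y] /=.
  by move=> xyA; split=> i; have := xyA i; rewrite tnth_mktuple; case: (i \in I).
by move=> [xA yA] i; have := xA i; have := yA i; rewrite tnth_mktuple; case: (i \in I).
Qed.

(* both sides are P^K on rectangles, which form a pi-system generating the
   sigma-algebra of tuples *)
Lemma pushforward_splice B : measurable B -> pushforward (Q \x Q) splice B = Q B.
Proof.
apply: (measure_unique (@measurable_rects _ T K) (fun=> setT)).
- exact: measurable_tuple_rects.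
- exact: setI_closed_rects.
- by move=> _; exists (fun=> setT) => //; apply/seteqP; split.
- by rewrite bigcup_const.
- exact: measurable_splice.
- move=> mf _ [Af mAf ->]; rewrite /= /pushforward splice_rect product_measure1E;
    try by apply: rect_measurable => i; case: (i \in I).
  rewrite QP // (_ : \prod_i P (Af i) =
      \prod_i P (if i \in I then Af i else setT) *
      \prod_i P (if i \in I then setT else Af i)).
    by congr (_ * _); apply: QP => i; case: (i \in I).
  rewrite -big_split; apply: eq_bigr => i _ /=.
  by case: (i \in I); rewrite probability_setT ?mul1e ?mule1.
- move=> mf _; rewrite /= /pushforward preimage_setT -setXTT product_measure1E //.
  apply: lte_mul_pinfty; rewrite ?fin_num_measure //.
  by rewrite -ge0_fin_numE ?fin_num_measure.
Qed.

Definition subtuple (t : K.-tuple T) : #|I|.-tuple T := map_tuple (tnth t) (enum_tuple I).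

Lemma measurable_subtuple : measurable_fun setT subtuple.
Proof.
apply/measurable_fun_tnthP => j.
have -> : @tnth _ T ^~ j \o subtuple = @tnth K T ^~ (tnth (enum_tuple I) j).
  by apply/funext => t; rewrite /= tnth_map.
exact: measurable_tnth.
Qed.

Lemma subtuple_splice x y : subtuple (splice (x, y)) = subtuple x.
Proof.
apply: eq_from_tnth => j; rewrite !tnth_map !tnth_ord_tuple /=.
by rewrite -mem_enum mem_tnth.
Qed.

End Splice.

Section CompressionEvent.
Local Open Scope ereal_scope.
Context d (T : measurableType d) (R : realType) (P : probability T R) (K : nat).
Variables (Q : probability (K.-tuple T) R) (I : {set 'I_K}).
Hypothesis QP : is_product_prob P Q.
Variables (W : set (#|I|.-tuple T * T)) (a : R).
Hypotheses (mW : measurable W) (a_ge0 : (0 <= a)%R).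

Definition compression_event : set (K.-tuple T) :=
  subtuple I @^-1` [set c | P (xsection W c) < a%:E] `&`
  \bigcap_(j in [set j | j \notin I]) [set t | W (subtuple I t, tnth t j)].

Lemma measurable_compression_event : measurable compression_event.
Proof.
apply: measurableI.
  rewrite -[X in measurable X]setTI; apply: measurable_subtuple => //.
  have := measurable_lte (g := cst a%:E) measurableT
    (measurable_fun_xsection P mW) (measurable_cst _).
  by rewrite setTI.
apply: fin_bigcap_measurable => [|j _]; first exact: finite_finset.
rewrite -[X in measurable X]setTI; apply: measurable_fun_pair => //.
  exact: measurable_subtuple.
exact: measurable_tnth.
Qed.

Lemma measurable_splice_compression_event :
  measurable (splice I @^-1` compression_event).
Proof.
rewrite -[X in measurable X]setTI; apply: measurable_splice => //.
exact: measurable_compression_event.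
Qed.

Lemma xsection_splice_compression_event x :
  xsection (splice I @^-1` compression_event) x `<=`
  rect (fun j => if j \in I then setT else xsection W (subtuple I x)).
Proof.
move=> y; rewrite /xsection /= inE => -[_ yW] j.
case: ifP => // /negbT jI; have := yW j jI.
by rewrite /= subtuple_splice tnth_mktuple (negbTE jI) => /mem_set.
Qed.

(* given the I-coordinates x, the K - #|I| other coordinates are independent
   and each satisfies W with probability below a *)
Lemma compression_xsection_le x :
  Q (xsection (splice I @^-1` compression_event) x) <= (a ^+ (K - #|I|))%:E.
Proof.
set p := P (xsection W (subtuple I x)).
have [unlikely|likely] := pselect (p < a%:E); last first.
  rewrite (_ : xsection _ x = set0) ?measure0 ?lee_fin ?exprn_ge0 //.
  apply/seteqP; split=> // y; rewrite /xsection /= inE => -[].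
  by rewrite /= subtuple_splice.
pose Af j := if j \in I then setT else xsection W (subtuple I x).
have mAf j : measurable (Af j).
  by rewrite /Af; case: (j \in I) => //; exact: measurable_xsection.
apply: (le_trans (y := Q (rect Af))).
  apply: le_measure; last exact: xsection_splice_compression_event.
    by rewrite inE; exact: measurable_xsection measurable_splice_compression_event.
  by rewrite inE; exact: rect_measurable.
have p_fin : p \is a fin_num by rewrite fin_num_measure //; exact: measurable_xsection.
have [p_ge0 p_le_a] : (0 <= fine p /\ fine p <= a)%R.
  by rewrite fine_ge0 ?measure_ge0 // -lee_fin fineK // ltW.
rewrite [Q _]QP // (eq_bigr (fun j => (if j \in ~: I then fine p else 1)%:E)).
  rewrite prodEFin lee_fin -big_mkcond /= (_ : (K - #|I|)%N = #|~: I|).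
    by rewrite -prodr_const; apply: ler_prod => j _; exact/andP.
  by have := cardsC I; rewrite card_ord => KE; rewrite -{1}KE addKn.
by move=> j _; rewrite /Af inE; case: (j \in I); rewrite ?probability_setT ?fineK.
Qed.

Lemma compression_event_le : Q compression_event <= (a ^+ (K - #|I|))%:E.
Proof.
rewrite -(pushforward_splice I QP measurable_compression_event) /pushforward /=.
apply: (le_trans (y := \int[Q]_x cst (a ^+ (K - #|I|))%:E x)); last first.
  rewrite integral_cst //.
  have -> : (Q : {measure set (K.-tuple T) -> \bar R}) setT = 1 by exact: probability_setT.
  by rewrite mule1.
apply: ge0_le_integral => //.
  exact: measurable_fun_xsection measurable_splice_compression_event.
by move=> x _; exact: compression_xsection_le.
Qed.

End CompressionEvent.

Lemma le_measure_bigsetU d (T : ringOfSetsType d) (R : realFieldType)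
    (mu : {content set T -> \bar R}) (I : finType) (p : pred I) (F : I -> set T) :
  (forall i, measurable (F i)) ->
  (mu (\big[setU/set0]_(i | p i) F i) <= \sum_(i | p i) mu (F i))%E.
Proof.
move=> mF; suff [] : measurable (\big[setU/set0]_(i | p i) F i) /\
  (mu (\big[setU/set0]_(i | p i) F i) <= \sum_(i | p i) mu (F i))%E by [].
apply: (big_rec2 (fun X s => measurable X /\ (mu X <= s)%E)).
  by rewrite measure0.
move=> i X s _ [mX muX]; split; first exact: measurableU.
exact: le_trans (measureU2 _ (mF i) mX) (leeD _ muX).
Qed.

Lemma sum_set_card_lt (R : pzSemiRingType) K (f : nat -> R) :
  \sum_(I : {set 'I_K} | (#|I| < K)%N) f #|I| = \sum_(h < K) 'C(K, h)%:R * f h.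
Proof.
transitivity (\sum_(I : {set 'I_K}) \sum_(h < K) (if #|I| == h then f h else 0)).
  rewrite big_mkcond /=; apply: eq_bigr => I _.
  have [I_lt|I_ge] := ltnP #|I| K; first by rewrite -big_mkcond (big_pred1 (Ordinal I_lt)).
  by rewrite big1 // => h _; rewrite gtn_eqF // (leq_trans (ltn_ord h) I_ge).
rewrite exchange_big /=; apply: eq_bigr => h _.
rewrite -big_mkcond /= sumr_const mulr_natl.
have := card_draws 'I_K h; rewrite card_ord => <-.
by congr (_ *+ _); apply: eq_card => I; rewrite !inE.
Qed.

Lemma In_tnth (U : Type) k (t : k.-tuple U) (j : 'I_k) : List.In (tnth t j) t.
Proof.
have j_lt : (j < size t)%N by rewrite size_tuple.
rewrite (tnth_nth (tnth_default t j)); move: (tnth_default t j) => x0.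
elim: (tval t) (nat_of_ord j) j_lt => [|x s IH] [|i] //= i_lt; first by left.
by right; exact: IH.
Qed.

Section ScenarioCompression.
Local Open Scope ereal_scope.
Context d (T : measurableType d) (R : realType) (P : probability T R) (K : nat).
Variables (Q : probability (K.-tuple T) R) (C : Type) (Theta : seq T -> C).
Variables (sat : C -> set T) (Ups : K.-tuple T -> {set 'I_K}).
(* the required satisfaction level, a h = 1 - eps h in the paper *)
Variable a : nat -> R.
Hypothesis QP : is_product_prob P Q.
Hypotheses (a_ge0 : forall h, (h <= K)%N -> (0 <= a h)%R) (aK : a K = 0%R).
Hypothesis Theta_sat : forall (t : K.-tuple T) j, sat (Theta t) (tnth t j).
Hypothesis Ups_support :
  forall t : K.-tuple T, Theta [seq tnth t i | i <- enum (Ups t)] = Theta t.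

Definition sat_graph p : set (p.-tuple T * T) := [set z | sat (Theta (tval z.1)) z.2].
Hypothesis measurable_sat_graph : forall p, (p <= K)%N -> measurable (@sat_graph p).

Let card_le (I : {set 'I_K}) : (#|I| <= K)%N.
Proof. by rewrite -[leqRHS](card_ord K) max_card. Qed.

Definition bad_samples : set (K.-tuple T) :=
  \big[setU/set0]_(I : {set 'I_K} | (#|I| < K)%N)
    compression_event P (@sat_graph #|I|) (a #|I|).

Lemma measurable_bad_samples : measurable bad_samples.
Proof.
apply: bigsetU_measurable => I _.
exact: measurable_compression_event (measurable_sat_graph (card_le I)).
Qed.

Lemma bad_samples_le :
  Q bad_samples <= (\sum_(h < K) 'C(K, h)%:R * a h ^+ (K - h))%:E.
Proof.
apply: le_trans (le_measure_bigsetU Q _ _) _ => [I|].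
  exact: measurable_compression_event (measurable_sat_graph (card_le I)).
rewrite -(sum_set_card_lt K (fun h => a h ^+ (K - h))%R) -sumEFin.
apply: lee_sum => I _; apply: compression_event_le => //.
  exact: measurable_sat_graph (card_le I).
exact: a_ge0 (card_le I).
Qed.

Lemma measurable_sat_Theta (t : K.-tuple T) : measurable (sat (Theta t)).
Proof.
rewrite (_ : sat _ = xsection (@sat_graph K) t); last by rewrite xsectionE.
exact: measurable_xsection (measurable_sat_graph (leqnn K)).
Qed.

(* Theta t is Theta of the support subsample I = Ups t and is satisfied by all
   the other samples, so otherwise t would lie in the compression event of I *)
Lemma not_bad_samples_sat_Theta_ge (t : K.-tuple T) :
  ~ bad_samples t -> (a #|Ups t|)%:E <= P (sat (Theta t)).
Proof.
move=> not_bad; set I := Ups t.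
have [I_lt|I_ge] := ltnP #|I| K; last first.
  by rewrite (@anti_leq #|I| K) ?card_le // aK measure_ge0.
have Theta_sub : Theta (subtuple I t) = Theta t := Ups_support t.
rewrite leNgt; apply/negP => unlikely; apply: not_bad.
rewrite /bad_samples (bigD1 I) //=; left; split=> [|j _].
  by rewrite /= (_ : xsection _ _ = sat (Theta t)) // xsectionE -Theta_sub.
by rewrite /sat_graph /= Theta_sub.
Qed.

Lemma scenario_compression : exists E : set (K.-tuple T),
  [/\ measurable E, (1 - \sum_(h < K) 'C(K, h)%:R * a h ^+ (K - h))%:E <= Q E
    & forall t, E t -> measurable (sat (Theta t)) /\ (a #|Ups t|)%:E <= P (sat (Theta t))].
Proof.
exists (~` bad_samples); split.
- exact: measurableC measurable_bad_samples.
- rewrite probability_setC ?EFinB; last exact: measurable_bad_samples.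
  by apply: leeB => //; exact: bad_samples_le.
- by move=> t /not_bad_samples_sat_Theta_ge; split=> //; exact: measurable_sat_Theta.
Qed.

End ScenarioCompression.

Theorem corollary1 (R : realType) (n m l N K : nat)
  (d : measure_display) (T : measurableType d) (P : probability T R)
  (iota : T -> 'cV[R]_l)
  (A : 'cV[R]_l -> 'M[R]_n) (B : 'cV[R]_l -> 'M[R]_(n, m))
  (X : set 'cV[R]_n) (U : set 'cV[R]_m) (S : set 'cV[R]_n)
  (xs : 'I_N -> 'cV[R]_n) (beta : R) (eps : nat -> R)
  (Theta : seq T -> Mset R m l N) (Ups : K.-tuple T -> {set 'I_K})
  (Q : probability (K.-tuple T) R) :
  (* Delta = range iota is a subset of R^l *)
  injective iota ->
  Cset X -> Cpolytope U -> Cpolytope S -> S `<=` X -> vertices_of S xs ->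
  0 < beta < 1 ->
  (forall h, (h <= K)%N -> 0 <= eps h <= 1) -> eps K = 1 ->
  \sum_(h < K) ('C(K, h))%:R * (1 - eps h) ^+ (K - h) = beta ->
  (* L_{delta_K} is nonempty for every delta_K *)
  (forall dK : K.-tuple T, Lseq iota A B U S xs dK !=set0) ->
  (* Theta_p is a tie-break map selecting an element of L of its argument *)
  (forall s : seq T, Lseq iota A B U S xs s !=set0 ->
     Lseq iota A B U S xs s (Theta s)) ->
  (* Ups_K returns the index set of a support subsample *)
  (forall dK : K.-tuple T,
     Theta [seq tnth dK i | i <- enum (Ups dK)] = Theta dK) ->
  (* Q is the product probability P^K *)
  is_product_prob P Q ->
  (* implicit measurability of the events involved *)
  (forall p : nat, (p <= K)%N ->
     measurable [set z : p.-tuple T * T | Lset A B U S xs (iota z.2) (Theta z.1)]) ->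
  exists E : set (K.-tuple T), measurable E /\ ((1 - beta)%:E <= Q E)%E /\
    forall dK : K.-tuple T, E dK ->
      exists G : set T, measurable G /\ ((1 - eps #|Ups dK|)%:E <= P G)%E /\
        G `<=` [set dl : T | vertex_law_invariant (A (iota dl)) (B (iota dl)) U S xs
                  (fun i => (Theta dK).1 i *m iota dl + (Theta dK).2 i)].
Proof.
move=> _ _ CU CS _ vertices _ eps01 epsK sum_beta L_nonempty Theta_L Ups_support QP mL.
have a_ge0 h : (h <= K)%N -> 0 <= 1 - eps h.
  by move=> /eps01 /andP[_]; rewrite subr_ge0.
have aK : 1 - eps K = 0 by rewrite epsK subrr.
have Theta_sat (t : K.-tuple T) j : Lset A B U S xs (iota (tnth t j)) (Theta t).
  exact: Theta_L (L_nonempty t) _ (In_tnth t j).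
have [E [mE QE goodE]] := scenario_compression
  (sat := fun c dl => Lset A B U S xs (iota dl) c) QP a_ge0 aK Theta_sat Ups_support mL.
exists E; split=> //; split; first by rewrite -sum_beta.
move=> t /goodE [mG PG]; exists [set dl | Lset A B U S xs (iota dl) (Theta t)].
by split=> //; split=> // dl Ldl; exact: vertex_law_invariant_of_feasible CU CS vertices Ldl.
Qed.
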